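(* Let $q\ge 2$ and $n,l\ge1$. For every IDF code over $l$ blocks for $\Pi^q_n$ (with stochastic or deterministic encoder and deterministic decoding sets) with $M\ge 2^{q^{nl}}$ messages, the type-I and type-II error probabilities satisfy $\lambda_1+\lambda_2\ge1$.
   Context: Fix an integer $q\ge 2$, $\mathcal A_q=\{1,\dots,q\}$. For $n\ge1$ and $\sigma\in S_n$, $\sigma\mathbf x=(x_{\sigma^{-1}(1)},\dots,x_{\sigma^{-1}(n)})$ for $\mathbf x\in\mathcal A_q^n$; the $n$-block $q$-ary uniform permutation channel $\Pi^q_n$ has input/output alphabet $\mathcal A_q^n$ and $\Pi^q_n(\mathbf y\mid\mathbf x)=\frac1{n!}\sum_{\sigma\in S_n}\mathbf 1\{\mathbf y=\sigma\mathbf x\}$. An identification-feedback (IDF) code over $l$ blocks with $M$ messages for $\Pi^q_n$ (with block-wise noiseless feedback) is a family $\{(\mathbb Q_{i,1},\dots,\mathbb Q_{i,l},\mathcal D_i)\}_{i=1}^M$ where $\mathbb Q_{i,j}(\mathbf x^{(j)}\mid \mathbf y^{(1)},\dots,\mathbf y^{(j-1)},\mathbf x^{(1)},\dots,\mathbf x^{(j-1)})$ is a conditional probability distribution on $\mathcal A_q^n$ given the previous output blocks (fed back) and previous input blocks, and $\mathcal D_i\subseteq(\mathcal A_q^n)^l$. When message $i$ is sent, the blocks have joint law $\mathbb P^{(i)}(\underline{\mathbf x},\underline{\mathbf y})=\prod_{j=1}^l\mathbb Q_{i,j}(\mathbf x^{(j)}\mid\mathbf y^{(1)},\dots,\mathbf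 y^{(j-1)},\mathbf x^{(1)},\dots,\mathbf x^{(j-1)})\,\Pi^q_n(\mathbf y^{(j)}\mid\mathbf x^{(j)})$. The code is deterministic if each $\mathbb Q_{i,j}$ is a point mass given by a function $\mathbf f_{i,j}$ of the past blocks. Error probabilities: $\lambda_{i\to j}=\mathbb P^{(i)}(\underline{\mathbf y}\in\mathcal D_j)$ for $i\ne j$, $\lambda_{i\not\to i}=\mathbb P^{(i)}(\underline{\mathbf y}\notin\mathcal D_i)$, type-I error $\lambda_1=\max_i\lambda_{i\not\to i}$, type-II error $\lambda_2=\max_{i\neq j}\lambda_{i\to j}$. *)

From HB Require Import structures.
From mathcomp Require Import all_boot all_order all_algebra all_fingroup.
Set Implicit Arguments. Unset Strict Implicit. Unset Printing Implicit Defensive.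
Import Order.TTheory GRing.Theory Num.Theory.
Local Open Scope ring_scope.

(* The alphabet A_q = {1,...,q} is represented by 'I_q = {0,...,q-1}. *)
Definition block (q n : nat) := n.-tuple 'I_q.

Definition permt (T : Type) (n : nat) (s : 'S_n) (x : n.-tuple T) : n.-tuple T :=
  [tuple tnth x ((s^-1)%g k) | k < n].

Definition Pi (R : realFieldType) (q n : nat) (y x : block q n) : R :=
  (#|[set s : 'S_n | y == permt s x]|)%:R / (n`!)%:R.

(* An encoder for one message: Q j (previous outputs) (previous inputs) x^(j) *)
Definition encoder (R : realFieldType) (q n l : nat) :=
  'I_l -> seq (block q n) -> seq (block q n) -> block q n -> R.

Definition valid_encoder (R : realFieldType) (q n l : nat) (Q : encoder R q n l) :=
  forall (j : 'I_l) (xs ys : l.-tuple (block q n)),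
    (forall b, 0 <= Q j (take j ys) (take j xs) b) /\
    \sum_(b : block q n) Q j (take j ys) (take j xs) b = 1.

Definition jointP (R : realFieldType) (q n l : nat) (Q : encoder R q n l)
  (xs ys : l.-tuple (block q n)) : R :=
  \prod_(j < l) (Q j (take j ys) (take j xs) (tnth xs j) * Pi R (tnth ys j) (tnth xs j)).

Definition prob_in (R : realFieldType) (q n l : nat) (Q : encoder R q n l)
  (D : {set l.-tuple (block q n)}) : R :=
  \sum_(xs : l.-tuple (block q n)) \sum_(ys in D) jointP Q xs ys.

Definition prob_notin (R : realFieldType) (q n l : nat) (Q : encoder R q n l)
  (D : {set l.-tuple (block q n)}) : R :=
  \sum_(xs : l.-tuple (block q n)) \sum_(ys | ys \notin D) jointP Q xs ys.

Definition lambda1 (R : realFieldType) (q n l M : nat) (Q : 'I_M -> encoder R q n l)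
  (D : 'I_M -> {set l.-tuple (block q n)}) : R :=
  \big[Num.max/0]_(i < M) prob_notin (Q i) (D i).

Definition lambda2 (R : realFieldType) (q n l M : nat) (Q : 'I_M -> encoder R q n l)
  (D : 'I_M -> {set l.-tuple (block q n)}) : R :=
  \big[Num.max/0]_(i < M) \big[Num.max/0]_(j < M | j != i) prob_in (Q i) (D j).

From HB Require Import structures.
From mathcomp Require Import all_boot all_order all_algebra all_fingroup.
Set Implicit Arguments. Unset Strict Implicit. Unset Printing Implicit Defensive.
Import Order.TTheory GRing.Theory Num.Theory.
Local Open Scope ring_scope.

(* Every encoder induces a probability law on the output blocks, so for any
   decoding set D the probabilities of [y \in D] and [y \notin D] add up to 1.
   If two messages share a decoding set D, the first being decoded in D and
   the second being decoded outside D are complementary events for the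
   second message, hence lambda_1 + lambda_2 >= 1.  Otherwise the decoding
   sets are pairwise distinct; as there are at least 2^(q^(nl)) of them, that
   is as many as there are sets of output words, one of them is empty, and
   that message is never decoded correctly: lambda_1 = 1. *)

Lemma big_tupleS (R : nmodType) (A : finType) m (F : m.+1.-tuple A -> R) :
  \sum_(t : m.+1.-tuple A) F t = \sum_(a : A) \sum_(t : m.-tuple A) F [tuple of a :: t].
Proof.
rewrite (reindex (fun p : A * m.-tuple A => [tuple of p.1 :: p.2])) /=.
  by rewrite pair_big; apply: eq_bigl => -[].
exists (fun t : m.+1.-tuple A => (thead t, [tuple of behead t])).
  by move=> [a t] _ /=; congr pair; apply: val_inj.
by move=> t _ /=; rewrite [RHS]tuple_eta; apply: val_inj.
Qed.

Lemma sum_prod_kernels_eq1 (R : pzSemiRingType) (A B : finType) (a0 : A) (b0 : B)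
    m (K : 'I_m -> seq A -> seq B -> A -> B -> R) :
  (forall j (xs : m.-tuple A) (ys : m.-tuple B),
     \sum_a \sum_b K j (take j xs) (take j ys) a b = 1) ->
  \sum_(xs : m.-tuple A) \sum_(ys : m.-tuple B)
     \prod_(j < m) K j (take j xs) (take j ys) (tnth xs j) (tnth ys j) = 1.
Proof.
elim: m K => [|m IH] K HK.
  have tuple0_eq (C : finType) (t : 0.-tuple C) : (t == [tuple]) = true.
    by rewrite [t]tuple0 eqxx.
  by rewrite !(big_pred1 [tuple]) ?big_ord0 // => t; rewrite /= tuple0_eq.
rewrite big_tupleS.
under eq_bigr => a _ do under eq_bigr => xs _ do rewrite big_tupleS.
under eq_bigr => a _ do rewrite exchange_big.
rewrite -[RHS](HK ord0 (nseq_tuple m.+1 a0) (nseq_tuple m.+1 b0)) /=.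
apply: eq_bigr => a _; apply: eq_bigr => b _.
under eq_bigr => xs _ do under eq_bigr => ys _ do rewrite big_ord_recl /= !tnth0.
under eq_bigr => xs _ do rewrite -mulr_sumr.
rewrite -mulr_sumr -[RHS]mulr1; congr (_ * _).
have HK' j (xs : m.-tuple A) (ys : m.-tuple B) :
    \sum_a' \sum_b' K (lift ord0 j) (a :: take j xs) (b :: take j ys) a' b' = 1.
  exact: (HK (lift ord0 j) [tuple of a :: xs] [tuple of b :: ys]).
rewrite -[RHS](IH (fun j px py => K (lift ord0 j) (a :: px) (b :: py)) HK').
apply: eq_bigr => xs _; apply: eq_bigr => ys _; apply: eq_bigr => j _.
by rewrite !tnthS.
Qed.

Lemma Pi_sum1 (R : realFieldType) q n (x : block q n) : \sum_y Pi R y x = 1.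
Proof.
rewrite /Pi -mulr_suml -natr_sum.
have -> : (\sum_(y : block q n) #|[set s : 'S_n | y == permt s x]|)%N = n`!.
  under eq_bigr => y _ do rewrite -sum1_card.
  rewrite (exchange_big_dep predT) //= -card_Sn -sum1_card.
  apply: eq_bigr => s _.
  by rewrite (big_pred1 (permt s x)) // => y; rewrite inE.
by rewrite divff // pnatr_eq0 -lt0n fact_gt0.
Qed.

Lemma jointP_sum1 (R : realFieldType) q n l (Q : encoder R q n l) :
  (0 < q)%N -> valid_encoder Q ->
  \sum_(xs : l.-tuple (block q n)) \sum_(ys : l.-tuple (block q n)) jointP Q xs ys = 1.
Proof.
move=> q_gt0 HQ; pose b0 : block q n := nseq_tuple n (Ordinal q_gt0).
apply: (sum_prod_kernels_eq1 b0 b0 (K := fun j px py a b => Q j py px a * Pi R b a)).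
move=> j xs ys; under eq_bigr => a _ do rewrite -mulr_sumr Pi_sum1 mulr1.
by case: (HQ j xs ys).
Qed.

Lemma prob_in_add_notin (R : realFieldType) q n l (Q : encoder R q n l) D :
  (0 < q)%N -> valid_encoder Q -> prob_in Q D + prob_notin Q D = 1.
Proof.
move=> q_gt0 HQ; rewrite -(jointP_sum1 q_gt0 HQ) -big_split /=.
by apply: eq_bigr => xs _; rewrite [RHS](bigID (mem D)).
Qed.

Section ErrorProbabilities.

Variables (R : realFieldType) (q n l M : nat).
Variables (Q : 'I_M -> encoder R q n l) (D : 'I_M -> {set l.-tuple (block q n)}).
Hypotheses (q_gt0 : (0 < q)%N) (HQ : forall i, valid_encoder (Q i)).

Lemma prob_notin_le_lambda1 i : prob_notin (Q i) (D i) <= lambda1 Q D.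
Proof. exact: (le_bigmax 0 (fun i => prob_notin (Q i) (D i))). Qed.

Lemma prob_in_le_lambda2 i j : j != i -> prob_in (Q i) (D j) <= lambda2 Q D.
Proof.
move=> neq_ji; apply: le_trans (le_bigmax _ _ i).
exact: (le_bigmax_cond _ (P := fun j => j != i)).
Qed.

Lemma lambda2_ge0 : 0 <= lambda2 Q D.
Proof.
rewrite /lambda2; elim/big_rec: _ => // i x _ x_ge0.
by rewrite le_max x_ge0 orbT.
Qed.

Lemma lambda_sum_ge1_shared_set i j :
  i != j -> D i = D j -> 1 <= lambda1 Q D + lambda2 Q D.
Proof.
move=> neq_ij eq_Dij; rewrite -(prob_in_add_notin (D j) q_gt0 (HQ j)) addrC.
by rewrite lerD ?prob_notin_le_lambda1 // -eq_Dij prob_in_le_lambda2.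
Qed.

Lemma lambda_sum_ge1_empty_set i : D i = set0 -> 1 <= lambda1 Q D + lambda2 Q D.
Proof.
move=> Di0; have prob_in0 : prob_in (Q i) (D i) = 0.
  by rewrite Di0 /prob_in big1 // => xs _; rewrite big_pred0 // => ys; rewrite inE.
rewrite -[1]addr0 lerD ?lambda2_ge0 // -(prob_in_add_notin (D i) q_gt0 (HQ i)).
by rewrite prob_in0 add0r prob_notin_le_lambda1.
Qed.

End ErrorProbabilities.

Lemma injective_sets_codom_set0 (T : finType) M (D : 'I_M -> {set T}) :
  injective D -> (2 ^ #|T| <= M)%N -> exists i, D i = set0.
Proof.
move=> injD le_M; have /codomP[i Di0] : set0 \in codom D.
  by apply: inj_card_onto; rewrite // card_ord -cardsT -powersetT card_powerset cardsT.
by exists i.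
Qed.

Theorem theorem3 (R : realFieldType) (q n l M : nat)
  (hq : (2 <= q)%N) (hn : (1 <= n)%N) (hl : (1 <= l)%N)
  (Q : 'I_M -> encoder R q n l) (D : 'I_M -> {set l.-tuple (block q n)})
  (HQ : forall i, valid_encoder (Q i))
  (HM : (2 ^ (q ^ (n * l)) <= M)%N) :
  1 <= lambda1 Q D + lambda2 Q D.
Proof.
(* Only a nonempty alphabet matters. *)
have q_gt0 : (0 < q)%N by apply: leq_trans hq.
have [injD | /injectivePn[i [j neq_ij eq_Dij]]] := boolP (injectiveb D).
  have card_words : #|{: l.-tuple (block q n)}| = (q ^ (n * l))%N.
    by rewrite !card_tuple card_ord -expnM.
  have [|i Di0] := injective_sets_codom_set0 (injectiveP _ injD).
    by rewrite card_words.
  exact: (lambda_sum_ge1_empty_set q_gt0 HQ Di0).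
exact: (lambda_sum_ge1_shared_set q_gt0 HQ neq_ij eq_Dij).
Qed.
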